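(* For any finite quasi-discrete closure model $\mathcal{M}=((X,\mathcal{C}_R),\mathcal{V})$ and any SLCS formula $\phi$ with $\mathit{size}(\phi)=k$, the procedure $\mathtt{Sat}(\mathcal{M},\phi)$ terminates in $\mathcal{O}(k\cdot(|X|+|R|))$ steps.
   Context: For $R\subseteq X\times X$, $\mathcal{C}_R(A)=A\cup\{x\mid\exists a\in A.(a,x)\in R\}$; a finite quasi-discrete closure model is $((X,\mathcal{C}_R),\mathcal{V})$ with $X$ finite and $\mathcal{V}:AP\to 2^X$. SLCS formulas: $\Phi::=a\mid\top\mid\lnot\Phi\mid\Phi\land\Phi\mid\mathcal{N}\Phi\mid\Phi\,\mathcal{S}\,\Phi\mid\Phi\rightsquigarrow\Phi$ ($a\in AP$). Size: $\mathit{size}(\top)=\mathit{size}(a)=1$; $\mathit{size}(\lnot\phi)=\mathit{size}(\mathcal{N}\phi)=1+\mathit{size}(\phi)$; $\mathit{size}(\phi_1\land\phi_2)=\mathit{size}(\phi_1\,\mathcal{S}\,\phi_2)=\mathit{size}(\phi_1\rightsquigarrow\phi_2)=1+\mathit{size}(\phi_1)+\mathit{size}(\phi_2)$. Let $\mathit{pre}(x)=\{y\mid(y,x)\in R\}$ and $\mathit{post}(x)=\{y\mid(x,y)\in R\}$. The procedure $\mathtt{Sat}(\mathcal{M},\phi)$ is defined recursively: $\top\mapsto X$; $a\mapsto\mathcal{V}(a)$; $\lnot\phi_1\mapsto X\setminus\mathtt{Sat}(\mathcal{M},\phi_1)$; $\phi_1\land\phi_2\mapsto\mathtt{Sat}(\mathcal{M},\phi_1)\cap\mathtt{Sat}(\mathcal{M},\phi_2)$;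 $\mathcal{N}\phi_1\mapsto\mathcal{C}_R(\mathtt{Sat}(\mathcal{M},\phi_1))$. For $\phi_1\,\mathcal{S}\,\phi_2$: set $V:=\mathtt{Sat}(\mathcal{M},\phi_1)$, $Q:=\mathtt{Sat}(\mathcal{M},\phi_2)$, $T:=\mathcal{C}_R(V\cup Q)\setminus(V\cup Q)$; while $T\neq\emptyset$: set $T':=\emptyset$, and for each $x\in T$ let $N:=\mathit{pre}(x)\cap V$, set $V:=V\setminus N$ and $T':=T'\cup(N\setminus Q)$; then $T:=T'$; finally return $V$. For $\phi_1\rightsquigarrow\phi_2$: set $V:=\mathtt{Sat}(\mathcal{M},\phi_1)$, $Q:=\mathtt{Sat}(\mathcal{M},\phi_2)$, $T:=\mathcal{C}_R(V)\cap Q$, $S:=T$, $Q:=Q\setminus T$; while $T\neq\emptyset$: set $T':=\emptyset$, for each $x\in T$ set $T':=T'\cup(Q\cap\mathit{post}(x))$; then $Q:=Q\setminus T'$, $S:=S\cup T'$, $T:=T'$; finally return $S$. *)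

From mathcomp Require Import all_boot.

Set Implicit Arguments.
Unset Strict Implicit.
Unset Printing Implicit Defensive.

Inductive formula (AP : Type) : Type :=
| FAtom of AP
| FTop
| FNot of formula AP
| FAnd of formula AP & formula AP
| FNear of formula AP
| FSurr of formula AP & formula AP
| FReach of formula AP & formula AP.
Arguments FTop {AP}.

Fixpoint fsize (AP : Type) (f : formula AP) : nat :=
  match f with
  | FAtom _ | FTop => 1
  | FNot g | FNear g => (fsize g).+1
  | FAnd g h | FSurr g h | FReach g h => (fsize g + fsize h).+1
  end.

Section Model.
(* A finite quasi-discrete closure model ((X, C_R), V): X finite, R a binary
   relation on X (given as a boolean relation), V a valuation. *)
Variables (X : finType) (R : rel X).

(* R as a set of pairs, so that |R| = #|edges R|. *)
Definition edges : {set X * X} := [set p | R p.1 p.2].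
Definition pre (x : X) : {set X} := [set y | R y x].
Definition post (x : X) : {set X} := [set y | R x y].
Definition closR (A : {set X}) : {set X} := A :|: [set x | [exists a in A, R a x]].

(* Cost model: a whole-set operation (copy, complement, intersection, union,
   difference of subsets of X, represented as bit vectors) costs |X|+1;
   computing C_R(A) costs |X|+|R|+1 (adjacency lists); inside the loops,
   pre(x)/post(x) are scanned in |pre x|+1 / |post x|+1 steps and updates of
   V, T', Q, S by a set N cost |N| (element-wise insertion/removal); each loop
   test, T' := ∅ and T := T' costs 1. *)
Definition setop_cost : nat := #|X|.+1.
Definition clos_cost : nat := #|X| + #|edges| + 1.

(* "for each x in T" loop of the surround case, with T enumerated by s.
   Returns (V, T', cost). *)
Fixpoint surr_for (Q V T' : {set X}) (s : seq X) : {set X} * {set X} * nat :=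
  match s with
  | [::] => (V, T', 0)
  | x :: s' =>
      let N := pre x :&: V in
      let: (V2, T2, c) := surr_for Q (V :\: N) (T' :|: (N :\: Q)) s' in
      (V2, T2, c + (#|pre x| + #|N| + #|N| + 1))
  end.

(* while T ≠ ∅ loop of the surround case: surr_loop Q V T Vf n means that the
   loop started in state (V, T) terminates with V = Vf after n steps, for some
   choice of the order in which each T is enumerated. *)
Inductive surr_loop (Q : {set X}) : {set X} -> {set X} -> {set X} -> nat -> Prop :=
| surr_loop_stop V : surr_loop Q V set0 V 1
| surr_loop_step V T s V1 T1 c Vf n :
    T != set0 -> perm_eq s (enum T) ->
    surr_for Q V set0 s = (V1, T1, c) ->
    surr_loop Q V1 T1 Vf n ->
    surr_loop Q V T Vf (c + 3 + n).

(* "for each x in T" loop of the reach case. Returns (T', cost). *)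
Fixpoint reach_for (Q T' : {set X}) (s : seq X) : {set X} * nat :=
  match s with
  | [::] => (T', 0)
  | x :: s' =>
      let P := Q :&: post x in
      let: (T2, c) := reach_for Q (T' :|: P) s' in
      (T2, c + (#|post x| + #|P| + 1))
  end.

(* while T ≠ ∅ loop of the reach case, state (Q, T, S). *)
Inductive reach_loop : {set X} -> {set X} -> {set X} -> {set X} -> nat -> Prop :=
| reach_loop_stop Q S : reach_loop Q set0 S S 1
| reach_loop_step Q T S s T1 c Sf n :
    T != set0 -> perm_eq s (enum T) ->
    reach_for Q set0 s = (T1, c) ->
    reach_loop (Q :\: T1) T1 (S :|: T1) Sf n ->
    reach_loop Q T S Sf (c + (#|T1| + #|T1|) + 4 + n).

(* Sat Val phi S n : the procedure Sat(M, phi) terminates returning S after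
   n steps. *)
Inductive Sat (AP : Type) (Val : AP -> {set X}) : formula AP -> {set X} -> nat -> Prop :=
| Sat_top : Sat Val FTop setT setop_cost
| Sat_atom a : Sat Val (FAtom a) (Val a) setop_cost
| Sat_not f S n : Sat Val f S n -> Sat Val (FNot f) (~: S) (n + setop_cost)
| Sat_and f1 f2 S1 S2 n1 n2 :
    Sat Val f1 S1 n1 -> Sat Val f2 S2 n2 ->
    Sat Val (FAnd f1 f2) (S1 :&: S2) (n1 + n2 + setop_cost)
| Sat_near f S n : Sat Val f S n -> Sat Val (FNear f) (closR S) (n + clos_cost)
| Sat_surr f1 f2 V Q n1 n2 Vf m :
    Sat Val f1 V n1 -> Sat Val f2 Q n2 ->
    surr_loop Q V (closR (V :|: Q) :\: (V :|: Q)) Vf m ->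
    Sat Val (FSurr f1 f2) Vf (n1 + n2 + clos_cost + setop_cost + setop_cost + m)
| Sat_reach f1 f2 V Q n1 n2 Sf m :
    Sat Val f1 V n1 -> Sat Val f2 Q n2 ->
    reach_loop (Q :\: (closR V :&: Q)) (closR V :&: Q) (closR V :&: Q) Sf m ->
    Sat Val (FReach f1 f2) Sf
        (n1 + n2 + clos_cost + setop_cost + setop_cost + setop_cost + m).

End Model.

(* Each while loop is paid for by a potential that drops by at least the cost
   of an iteration. In the surround loop a point enters T only when it leaves
   V, so [sum_(x in T) (|pre x| + 4) + sum_(x in V) (|pre x| + 6)] covers both
   the scans of pre x for x in T and the removals from V; in the reach loop
   every new T is removed from Q, and [sum_(x in T) (2 |post x| + 5) +
   sum_(x in Q) (2 |post x| + 7)] plays the same role. Initially T is disjoint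
   from V (resp. Q), and sum_x |pre x| = sum_x |post x| = |R|, so the
   potentials are initially at most 7 (|X| + |R|). The decrease also gives
   termination, and each connective costs at most 11 (|X| + |R| + 1) on top
   of its subformulas. *)
From mathcomp Require Import all_boot zify.

Set Implicit Arguments.
Unset Strict Implicit.
Unset Printing Implicit Defensive.

Lemma leq_sum_disjoint (T : finType) (w : T -> nat) (A B C : {set T}) :
  [disjoint A & B] -> A :|: B \subset C ->
  \sum_(x in A) w x + \sum_(x in B) w x <= \sum_(x in C) w x.
Proof.
move=> dAB sABC; rewrite -bigU //.
rewrite (eq_bigl [in A :|: B]) => [|x]; last by rewrite !inE.
rewrite -2!big_condT.
exact: (@subset_le_big _ addn leq leqnn (fun m n => leq_addr n m) 0 _ _ _ xpredT).
Qed.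

Lemma leq_card_disjoint (T : finType) (A B C : {set T}) :
  [disjoint A & B] -> A :|: B \subset C -> #|A| + #|B| <= #|C|.
Proof. by rewrite -!sum1_card; apply: leq_sum_disjoint. Qed.

Lemma disjoint_setD (T : finType) (A B : {set T}) : [disjoint A :\: B & B].
Proof. by have /subsetDP[] := subxx (A :\: B). Qed.

Section Model.
Variables (X : finType) (R : rel X).

Lemma sum_card_post : \sum_x #|post R x| = #|edges R|.
Proof.
rewrite /edges -sum1dep_card -(pair_big_dep xpredT (fun x y => R x y) (fun _ _ => 1)) /=.
by apply: eq_bigr => x _; rewrite /post sum1dep_card.
Qed.

Lemma sum_card_pre : \sum_x #|pre R x| = #|edges R|.
Proof.
rewrite -sum_card_post (eq_bigr (fun x => \sum_(y | R y x) 1)) => [|x _].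
  by rewrite (exchange_big_dep xpredT) //=; apply: eq_bigr => y _; rewrite sum1dep_card.
by rewrite /pre sum1dep_card.
Qed.

Lemma sum_disjoint_pre_bound (A B : {set X}) : [disjoint A & B] ->
  \sum_(x in A) #|pre R x| + \sum_(x in B) #|pre R x| <= #|edges R|.
Proof.
move=> dAB; apply: leq_trans (leq_sum_disjoint _ dAB (subsetT _)) _.
by rewrite -sum_card_pre; apply/eq_leq/eq_bigl => x; rewrite inE.
Qed.

Lemma sum_disjoint_post_bound (A B : {set X}) : [disjoint A & B] ->
  \sum_(x in A) #|post R x| + \sum_(x in B) #|post R x| <= #|edges R|.
Proof.
move=> dAB; apply: leq_trans (leq_sum_disjoint _ dAB (subsetT _)) _.
by rewrite -sum_card_post; apply/eq_leq/eq_bigl => x; rewrite inE.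
Qed.

Lemma card_disjoint_bound (A B : {set X}) : [disjoint A & B] -> #|A| + #|B| <= #|X|.
Proof. by move=> dAB; rewrite -cardsT; apply: leq_card_disjoint (subsetT _). Qed.

Lemma surr_for_spec Q V T' s V1 T1 c : surr_for R Q V T' s = (V1, T1, c) ->
  [/\ V1 \subset V, T1 \subset T' :|: (V :\: V1) &
      c + 2 * #|V1| <= \sum_(x <- s) (#|pre R x| + 1) + 2 * #|V|].
Proof.
elim: s V T' V1 T1 c => [|x s IH] V T' V1 T1 c /=.
  by case=> <- <- <-; rewrite setDv setU0 big_nil.
set N := pre R x :&: V.
case E: surr_for => [[V2 T2] c2] [<- <- <-].
have [sV2 sT2 c2_le] := IH _ _ _ _ _ E.
have cardV : #|N| + #|V :\: N| = #|V| by rewrite -(cardsID N V) (setIidPr (subsetIr _ _)).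
split.
- exact: subset_trans sV2 (subsetDl _ _).
- apply: subset_trans sT2 _; apply/subsetP => y; move: (subsetP sV2 y).
  rewrite /N /pre !inE.
  by case: (y \in T'); case: (y \in Q); case: (y \in V2); case: (y \in V); case: (R y x).
- by rewrite big_cons; lia.
Qed.

Definition surr_potential (V T : {set X}) :=
  \sum_(x in T) #|pre R x| + 4 * #|T| + \sum_(x in V) #|pre R x| + 6 * #|V|.

Lemma surr_potential_bound (V T : {set X}) : [disjoint T & V] ->
  surr_potential V T <= 6 * (#|X| + #|edges R|).
Proof.
move=> dTV; rewrite /surr_potential.
have := sum_disjoint_pre_bound dTV; have := card_disjoint_bound dTV; lia.
Qed.

Lemma surr_step Q V T s V1 T1 c :
  T != set0 -> perm_eq s (enum T) -> surr_for R Q V set0 s = (V1, T1, c) ->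
  c + 3 + surr_potential V1 T1 <= surr_potential V T.
Proof.
move=> nT perm_s E; have [sV1 sT1 c_le] := surr_for_spec E.
rewrite set0U in sT1; have /subsetDP[sT1V dT1] := sT1.
have sTV : T1 :|: V1 \subset V by rewrite subUset sT1V.
rewrite /surr_potential; move: c_le.
rewrite (perm_big _ perm_s) big_enum /= big_split /= sum1_card.
have := leq_sum_disjoint (fun x => #|pre R x|) dT1 sTV.
have := leq_card_disjoint dT1 sTV.
have : 0 < #|T| by rewrite card_gt0.
lia.
Qed.

Lemma surr_loop_potential Q V T Vf n :
  surr_loop R Q V T Vf n -> n <= surr_potential V T + 1.
Proof.
elim=> {V T Vf n} [V|V T s V1 T1 c Vf n nT perm_s E _ IH]; first by rewrite addn1.
by have := surr_step nT perm_s E; lia.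
Qed.

Lemma surr_loop_cost Q V T Vf n : surr_loop R Q V T Vf n -> [disjoint T & V] ->
  n <= 6 * (#|X| + #|edges R|) + 1.
Proof.
by move=> L dTV; rewrite (leq_trans (surr_loop_potential L)) ?leq_add2r ?surr_potential_bound.
Qed.

Lemma surr_loop_exists Q V T : exists Vf n, surr_loop R Q V T Vf n.
Proof.
have [k] := ubnP (surr_potential V T); elim: k V T => // k IH V T lt_pot.
have [->|nT] := eqVneq T set0; first by exists V, 1; apply: surr_loop_stop.
case E: (surr_for R Q V set0 (enum T)) => [[V1 T1] c].
have [|Vf [n L]] := IH V1 T1.
  by have := surr_step nT (perm_refl _) E; lia.
by exists Vf, (c + 3 + n); apply: surr_loop_step nT (perm_refl _) E L.
Qed.

Lemma reach_for_spec Q T' s T1 c : reach_for R Q T' s = (T1, c) ->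
  T1 \subset T' :|: Q /\ c <= \sum_(x <- s) (2 * #|post R x| + 1).
Proof.
elim: s T' T1 c => [|x s IH] T' T1 c /=.
  by case=> <- <-; rewrite subsetUl big_nil.
case E: reach_for => [T2 c2] [<- <-].
have [sT2 c2_le] := IH _ _ _ E.
have : #|Q :&: post R x| <= #|post R x| by rewrite subset_leq_card ?subsetIr.
split; last by rewrite big_cons; lia.
by apply: subset_trans sT2 _; rewrite -setUA setUS // subUset subsetIl subxx.
Qed.

Definition reach_potential (Q T : {set X}) :=
  2 * \sum_(x in T) #|post R x| + 5 * #|T| + 2 * \sum_(x in Q) #|post R x| + 7 * #|Q|.

Lemma reach_potential_bound (Q T : {set X}) : [disjoint T & Q] ->
  reach_potential Q T <= 7 * (#|X| + #|edges R|).
Proof.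
move=> dTQ; rewrite /reach_potential.
have := sum_disjoint_post_bound dTQ; have := card_disjoint_bound dTQ; lia.
Qed.

Lemma reach_step Q T s T1 c :
  T != set0 -> perm_eq s (enum T) -> reach_for R Q set0 s = (T1, c) ->
  c + (#|T1| + #|T1|) + 4 + reach_potential (Q :\: T1) T1 <= reach_potential Q T.
Proof.
move=> nT perm_s E; have [sT1 c_le] := reach_for_spec E; rewrite set0U in sT1.
have dT1 : [disjoint T1 & Q :\: T1] by rewrite disjoint_sym disjoint_setD.
have sTQ : T1 :|: (Q :\: T1) \subset Q by rewrite subUset sT1 subsetDl.
rewrite /reach_potential; move: c_le.
rewrite (perm_big _ perm_s) big_enum /= big_split /= sum1_card -big_distrr /=.
have := leq_sum_disjoint (fun x => #|post R x|) dT1 sTQ.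
have := leq_card_disjoint dT1 sTQ.
have : 0 < #|T| by rewrite card_gt0.
lia.
Qed.

Lemma reach_loop_potential Q T S Sf n :
  reach_loop R Q T S Sf n -> n <= reach_potential Q T + 1.
Proof.
elim=> {Q T S Sf n} [Q S|Q T S s T1 c Sf n nT perm_s E _ IH]; first by rewrite addn1.
by have := reach_step nT perm_s E; lia.
Qed.

Lemma reach_loop_cost Q T S Sf n : reach_loop R Q T S Sf n -> [disjoint T & Q] ->
  n <= 7 * (#|X| + #|edges R|) + 1.
Proof.
by move=> L dTQ; rewrite (leq_trans (reach_loop_potential L)) ?leq_add2r ?reach_potential_bound.
Qed.

Lemma reach_loop_exists Q T S : exists Sf n, reach_loop R Q T S Sf n.
Proof.
have [k] := ubnP (reach_potential Q T); elim: k Q T S => // k IH Q T S lt_pot.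
have [->|nT] := eqVneq T set0; first by exists S, 1; apply: reach_loop_stop.
case E: (reach_for R Q set0 (enum T)) => [T1 c].
have [|Sf [n L]] := IH (Q :\: T1) T1 (S :|: T1).
  by have := reach_step nT (perm_refl _) E; lia.
by exists Sf, (c + (#|T1| + #|T1|) + 4 + n); apply: reach_loop_step nT (perm_refl _) E L.
Qed.

Variables (AP : Type) (Val : AP -> {set X}).

Lemma Sat_exists phi : exists S n, Sat R Val phi S n.
Proof.
elim: phi => [a||f [S [n H]]|f1 [S1 [n1 H1]] f2 [S2 [n2 H2]]|f [S [n H]]
             |f1 [V [n1 H1]] f2 [Q [n2 H2]]|f1 [V [n1 H1]] f2 [Q [n2 H2]]].
- by do 2!eexists; apply: Sat_atom.
- by do 2!eexists; apply: Sat_top.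
- by do 2!eexists; apply: Sat_not H.
- by do 2!eexists; apply: Sat_and H1 H2.
- by do 2!eexists; apply: Sat_near H.
- have [Vf [m L]] := surr_loop_exists Q V (closR R (V :|: Q) :\: (V :|: Q)).
  by do 2!eexists; apply: Sat_surr H1 H2 L.
- have [Sf [m L]] := reach_loop_exists (Q :\: (closR R V :&: Q)) (closR R V :&: Q)
                       (closR R V :&: Q).
  by do 2!eexists; apply: Sat_reach H1 H2 L.
Qed.

Lemma Sat_cost phi S n : Sat R Val phi S n ->
  n <= 11 * fsize phi * (#|X| + #|edges R| + 1).
Proof.
set N := #|X| + #|edges R| + 1.
have setop_le : setop_cost X <= N by rewrite /setop_cost /N; lia.
have clos_le : clos_cost R <= N by rewrite /clos_cost /N.
elim=> {S n phi} /=.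
- lia.
- lia.
- by move=> f S n _ IH; nia.
- by move=> f1 f2 S1 S2 n1 n2 _ IH1 _ IH2; nia.
- by move=> f S n _ IH; nia.
- move=> f1 f2 V Q n1 n2 Vf m _ IH1 _ IH2 L.
  have dTV : [disjoint closR R (V :|: Q) :\: (V :|: Q) & V].
    exact: disjointWr (subsetUl V Q) (disjoint_setD _ _).
  by have := surr_loop_cost L dTV; nia.
- move=> f1 f2 V Q n1 n2 Sf m _ IH1 _ IH2 L.
  have dTQ : [disjoint closR R V :&: Q & Q :\: (closR R V :&: Q)].
    by rewrite disjoint_sym disjoint_setD.
  by have := reach_loop_cost L dTQ; nia.
Qed.

End Model.

Theorem lemma6p2 :
  exists c : nat,
    forall (AP : Type) (X : finType) (R : rel X) (Val : AP -> {set X})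
           (phi : formula AP),
      (exists (S : {set X}) (n : nat), Sat R Val phi S n) /\
      (forall (S : {set X}) (n : nat),
          Sat R Val phi S n -> n <= c * fsize phi * (#|X| + #|edges R| + 1)).
Proof.
exists 11 => AP X R Val phi; split; first exact: Sat_exists.
exact: Sat_cost.
Qed.
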